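(* Suppose $w,w'\in[d]^n$ differ in exactly one coordinate, and let $\lambda=\mathrm{shRSK}(w)$, $\lambda'=\mathrm{shRSK}(w')$. Then for every $k\in[d]$: $|(\lambda_1+\cdots+\lambda_k)-(\lambda'_1+\cdots+\lambda'_k)|\le1$ and $|\lambda_k-\lambda'_k|\le2$.
   Context: $\mathrm{shRSK}(w)$ is the RSK shape of $w$: the Young diagram $\lambda_1\ge\cdots\ge\lambda_d\ge0$ whose first $k$ rows sum to the maximum total length of a union of $k$ disjoint weakly increasing subsequences of $w$. *)

From mathcomp Require Import all_boot.
Set Implicit Arguments. Unset Strict Implicit. Unset Printing Implicit Defensive.

(* A word w in [d]^n is a function 'I_n -> 'I_d (letters 0..d-1, order preserved). *)

Definition weakly_incr_on (n d : nat) (w : 'I_n -> 'I_d) (S : {set 'I_n}) : bool :=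
  [forall i in S, forall j in S, (i < j)%N ==> (w i <= w j)%N].

Definition incr_family (n d k : nat) (w : 'I_n -> 'I_d)
    (F : {ffun 'I_k -> {set 'I_n}}) : bool :=
  [forall a, weakly_incr_on w (F a)] &&
  [forall a, forall b, (a != b) ==> [disjoint F a & F b]].

Definition greene (n d : nat) (w : 'I_n -> 'I_d) (k : nat) : nat :=
  \max_(F : {ffun 'I_k -> {set 'I_n}} | incr_family w F) #|\bigcup_(a < k) F a|.

(* The RSK shape, 1-indexed: shRSK w k = lambda_k = greene k - greene (k-1). *)
Definition shRSK (n d : nat) (w : 'I_n -> 'I_d) (k : nat) : nat :=
  greene w k - greene w k.-1.

From mathcomp Require Import all_boot.
From mathcomp Require Import zify.

Set Implicit Arguments.
Unset Strict Implicit.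
Unset Printing Implicit Defensive.

(* Changing the letter at one position i only affects subsequences through i:
   deleting i from every member of an optimal family for w gives a family for
   w' that loses at most one position.  The bound on lambda_k follows from the
   bounds on the Greene invariants of ranks k and k - 1. *)

Section OnePositionChange.

Variables (n d : nat) (w w' : 'I_n -> 'I_d) (i : 'I_n).
Hypothesis eq_off_i : forall j, j != i -> w j = w' j.

Lemma weakly_incr_on_sub (u : 'I_n -> 'I_d) (S T : {set 'I_n}) :
  T \subset S -> weakly_incr_on u S -> weakly_incr_on u T.
Proof.
move=> /subsetP sTS /forallP incrS; apply/forallP => x; apply/implyP => /sTS Sx.
apply/forallP => y; apply/implyP => /sTS Sy.
by move: (incrS x) => /implyP /(_ Sx) /forallP /(_ y) /implyP /(_ Sy).
Qed.

Lemma weakly_incr_on_setD1 (S : {set 'I_n}) :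
  weakly_incr_on w S -> weakly_incr_on w' (S :\ i).
Proof.
move=> /(weakly_incr_on_sub (subD1set S i)) /forallP incrS.
apply/forallP => x; apply/implyP => Sx; apply/forallP => y; apply/implyP => Sy.
move: (Sx) (Sy); rewrite !in_setD1 => /andP[xi _] /andP[yi _].
rewrite -(eq_off_i xi) -(eq_off_i yi).
by move: (incrS x) => /implyP /(_ Sx) /forallP /(_ y) /implyP /(_ Sy).
Qed.

Lemma incr_family_setD1 (k : nat) (F : {ffun 'I_k -> {set 'I_n}}) :
  incr_family w F -> incr_family w' [ffun a => F a :\ i].
Proof.
move=> /andP[/forallP incrF /forallP disjF]; apply/andP; split.
  by apply/forallP => a; rewrite ffunE; apply: weakly_incr_on_setD1.
apply/forallP => a; apply/forallP => b; apply/implyP => ab; rewrite !ffunE.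
apply: disjointWl (subD1set _ _) _; apply: disjointWr (subD1set _ _) _.
by move: (disjF a) => /forallP /(_ b) /implyP /(_ ab).
Qed.

Lemma card_bigcup_setD1 (k : nat) (F : 'I_k -> {set 'I_n}) :
  #|\bigcup_(a < k) F a| <= #|\bigcup_(a < k) (F a :\ i)| + 1.
Proof.
have sub : \bigcup_(a < k) F a \subset i |: \bigcup_(a < k) (F a :\ i).
  apply/subsetP => x /bigcupP[a _ Fax]; rewrite in_setU1.
  have [//|xi] := eqVneq x i.
  by apply/bigcupP; exists a; rewrite ?in_setD1 ?xi.
apply: leq_trans (subset_leq_card sub) _.
by rewrite cardsU1 addnC leq_add2l leq_b1.
Qed.

Lemma greene_le_change_one (k : nat) : greene w k <= greene w' k + 1.
Proof.
apply/bigmax_leqP => F incrF.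
apply: leq_trans (card_bigcup_setD1 F) _; rewrite leq_add2r.
have -> : \bigcup_(a < k) (F a :\ i) = \bigcup_(a < k) [ffun a => F a :\ i] a.
  by apply: eq_bigr => a _; rewrite ffunE.
by apply: leq_bigmax_cond; apply: incr_family_setD1.
Qed.

End OnePositionChange.

Lemma cards_neq1_eq_off (n d : nat) (w w' : 'I_n -> 'I_d) :
  #|[set j | w j != w' j]| = 1 -> exists i, forall j, j != i -> w j = w' j.
Proof.
move=> /eqP /cards1P[i diff_i]; exists i => j ji; apply/eqP.
apply: contraNT ji => wj; have : j \in [set j | w j != w' j] by rewrite inE.
by rewrite diff_i inE.
Qed.

Theorem mainTheorem11 (n d : nat) (w w' : 'I_n -> 'I_d) :
  #|[set i : 'I_n | w i != w' i]| = 1 ->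
  forall k : nat, (1 <= k <= d)%N ->
    ((greene w k <= greene w' k + 1)%N /\ (greene w' k <= greene w k + 1)%N) /\
    ((shRSK w k <= shRSK w' k + 2)%N /\ (shRSK w' k <= shRSK w k + 2)%N).
Proof.
move=> /cards_neq1_eq_off[i eq_off_i] k _.
have eq_off_i' j : j != i -> w' j = w j by move/eq_off_i.
have := greene_le_change_one eq_off_i k; have := greene_le_change_one eq_off_i' k.
have := greene_le_change_one eq_off_i k.-1.
have := greene_le_change_one eq_off_i' k.-1.
rewrite /shRSK; lia.
Qed.
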